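(* Let $a\in[0,\infty)$ and let $t:[0,1]\to[0,\infty]$ and $s:[0,\infty]\to[0,1]$ be continuous and increasing functions such that $G_{t,s}(x,y)=s(t(x)+t(y))$ defines a grouping function $G_{t,s}:[0,1]^2\to[0,1]$ having $0$ as neutral element (i.e. $G_{t,s}(x,0)=x$ for all $x\in[0,1]$). If $t(x)=\frac{a}{2}$ holds if and only if $x=0$, then $G_{t,s}$ is associative.
   Context: ''Increasing'' means non-decreasing. Arithmetic in $[0,\infty]$ uses $c+\infty=\infty$; continuity on $[0,\infty]$ refers to the usual topology of the extended half-line. A grouping function is a map $G:[0,1]^2\to[0,1]$ that is (G1) commutative, (G2) $G(x,y)=0$ iff $x=y=0$, (G3) $G(x,y)=1$ iff $x=1$ or $y=1$, (G4) increasing in each variable, (G5) continuous. *)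

From HB Require Import structures.
From mathcomp Require Import all_boot all_order all_algebra.
From mathcomp Require Import all_classical all_reals all_analysis.
Set Implicit Arguments. Unset Strict Implicit. Unset Printing Implicit Defensive.
Import Order.TTheory GRing.Theory Num.Theory.
Import numFieldNormedType.Exports.
Local Open Scope classical_set_scope.
Local Open Scope ring_scope.

Definition unit_itv (R : realType) : set R := [set x : R | 0 <= x <= 1].

Definition unit_sq (R : realType) : set (R * R) :=
  [set p : R * R | (0 <= p.1 <= 1) /\ (0 <= p.2 <= 1)].

(* Grouping function G : [0,1]^2 -> [0,1], given as a function R -> R -> R
   whose behaviour is only constrained on [0,1]^2. *)
Definition grouping_function (R : realType) (G : R -> R -> R) : Prop :=
  (forall x y, unit_itv x -> unit_itv y -> 0 <= G x y <= 1) /\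
  (forall x y, unit_itv x -> unit_itv y -> G x y = G y x) /\
  (forall x y, unit_itv x -> unit_itv y -> (G x y = 0 <-> (x = 0 /\ y = 0))) /\
  (forall x y, unit_itv x -> unit_itv y -> (G x y = 1 <-> (x = 1 \/ y = 1))) /\
  (forall x x' y, unit_itv x -> unit_itv x' -> unit_itv y ->
     x <= x' -> G x y <= G x' y) /\
  (forall x y y', unit_itv x -> unit_itv y -> unit_itv y' ->
     y <= y' -> G x y <= G x y') /\
  {within @unit_sq R, continuous (fun p : R * R => G p.1 p.2)}.

(** Write [G x y := s (t x + t y)] and [e := t 0 = a/2], which is finite. The
    neutral element law [s (t c + e) = c] makes [s] a left inverse of
    [c |-> t c + e], and by the intermediate value theorem [t] maps [[0,1]]
    onto [[e, t 1]]. Hence, as long as [t x + t y - e <= t 1], [G x y] is the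
    point [c] with [t c = t x + t y - e], so [G (G x y) z = s (t x + t y + t z - e)];
    beyond [t 1] both sides saturate at [s (t 1 + e) = 1]. The right-hand side
    is symmetric in [x, y, z]. *)

From HB Require Import structures.
From mathcomp Require Import all_boot all_order all_algebra.
From mathcomp Require Import all_classical all_reals all_analysis.
Set Implicit Arguments. Unset Strict Implicit. Unset Printing Implicit Defensive.
Import Order.TTheory GRing.Theory Num.Theory.
Import numFieldNormedType.Exports.
Local Open Scope classical_set_scope.
Local Open Scope ring_scope.

Lemma continuous_contract (R : realType) : continuous (@contract R).
Proof.
move=> x; apply/cvgrPdist_lt => e e0.
by apply: filterS (@nbhsx_ballx R (\bar R) x e e0) => y.
Qed.

Lemma ereal_IVT (R : realType) (f : R -> \bar R) (a b : R) (w : \bar R) :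
  a <= b -> {within `[a, b], continuous f} -> (f a <= w <= f b)%E ->
  exists2 c, c \in `[a, b] & f c = w.
Proof.
move=> ab fC fab.
have cfC : {within `[a, b], continuous (@contract R \o f)}.
  by apply: within_continuous_comp fC => y _; exact: continuous_contract.
have [|c cab /contract_inj fcw] := IVT ab cfC (v := contract w); last by exists c.
by case/andP: fab => faw wfb; rewrite ge_min le_max !le_contract faw wfb orbT.
Qed.

Lemma unit_itvE (R : realType) : @unit_itv R = `[0, 1]%classic.
Proof. by apply/seteqP; split => x; rewrite /= in_itv. Qed.

Lemma unit_itv0 (R : realType) : @unit_itv R 0.
Proof. by rewrite /unit_itv /= lexx ler01. Qed.

Lemma unit_itv1 (R : realType) : @unit_itv R 1.
Proof. by rewrite /unit_itv /= lexx ler01. Qed.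

Section additive_generator.
Local Open Scope ereal_scope.

Variables (R : realType) (t : R -> \bar R) (s : \bar R -> R).
Hypothesis t_ge0 : forall x, unit_itv x -> 0 <= t x.
Hypothesis t_cont : {within @unit_itv R, continuous t}.
Hypothesis t_mono : forall x y, unit_itv x -> unit_itv y -> (x <= y)%R -> t x <= t y.
Hypothesis s_le1 : forall u, 0 <= u -> (s u <= 1)%R.
Hypothesis s_mono : forall u v, 0 <= u -> u <= v -> (s u <= s v)%R.
Hypothesis t0_fin : t 0 \is a fin_num.
Hypothesis s_neutral : forall x, unit_itv x -> s (t x + t 0) = x.

Lemma t0_le_t x : unit_itv x -> t 0 <= t x.
Proof. by move=> Ix; apply: t_mono (unit_itv0 R) (Ix) _; case/andP: Ix. Qed.

Lemma t_onto w : t 0 <= w <= t 1 -> exists2 c, unit_itv c & t c = w.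
Proof.
move=> tw; have [|c c01 tcw] := ereal_IVT ler01 _ tw; first by rewrite -unit_itvE.
by exists c; rewrite // unit_itvE.
Qed.

Lemma s_eq1 u : t 1 + t 0 <= u -> s u = 1%R.
Proof.
move=> tu; have t10_ge0 : 0 <= t 1 + t 0.
  by rewrite adde_ge0 // t_ge0 //; [exact: unit_itv1 | exact: unit_itv0].
apply/eqP; rewrite eq_le s_le1 ?(le_trans t10_ge0) //=.
by rewrite -{1}(s_neutral (unit_itv1 R)) s_mono.
Qed.

Lemma s_t_s_addE x y z : unit_itv x -> unit_itv y -> unit_itv z ->
  s (t (s (t x + t y)) + t z) = s (t x + t y + t z - t 0).
Proof.
move=> Ix Iy Iz; set u := t x + t y - t 0.
have xyE : t x + t y = u + t 0 by rewrite subeK.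
have [ut1|t1u] := leP u (t 1).
  have t0u : t 0 <= u.
    by rewrite /u -addeA (le_trans (t0_le_t Ix)) // leeDl // sube_ge0 ?t0_fin // t0_le_t.
  have /t_onto[c Ic tcu] : t 0 <= u <= t 1 by rewrite t0u.
  by rewrite xyE -tcu s_neutral // (addeAC (t c)) addeK.
have t1xy : t 1 + t 0 <= t x + t y by rewrite xyE leeD2r // ltW.
rewrite (s_eq1 t1xy) !s_eq1 //; last exact: leeD (lexx _) (t0_le_t Iz).
by apply: le_trans (leeD (ltW t1u) (t0_le_t Iz)) _; rewrite /u addeAC.
Qed.

End additive_generator.

Theorem proposition6p5 (R : realType) (a : R) (t : R -> \bar R) (s : \bar R -> R) :
  0 <= a ->
  (* t : [0,1] -> [0,+oo], continuous and increasing *)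
  (forall x, unit_itv x -> (0 <= t x)%E) ->
  {within @unit_itv R, continuous t} ->
  (forall x y, unit_itv x -> unit_itv y -> x <= y -> (t x <= t y)%E) ->
  (* s : [0,+oo] -> [0,1], continuous and increasing *)
  (forall u : \bar R, (0 <= u)%E -> 0 <= s u <= 1) ->
  {within [set u : \bar R | (0 <= u)%E], continuous s} ->
  (forall u v : \bar R, (0 <= u)%E -> (u <= v)%E -> s u <= s v) ->
  (* G_{t,s}(x,y) = s(t(x)+t(y)) is a grouping function with neutral element 0 *)
  grouping_function (fun x y => s (t x + t y)%E) ->
  (forall x, unit_itv x -> s (t x + t 0%R)%E = x) ->
  (* t(x) = a/2 iff x = 0 *)
  (forall x, unit_itv x -> (t x = (a / 2)%:E <-> x = 0)) ->
  (* conclusion: G_{t,s} is associative *)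
  forall x y z, unit_itv x -> unit_itv y -> unit_itv z ->
    s (t (s (t x + t y)%E) + t z)%E = s (t x + t (s (t y + t z)%E))%E.
Proof.
move=> _ t_ge0 t_cont t_mono s_range _ s_mono _ s_neutral t0E x y z Ix Iy Iz.
have t0_fin : t 0 \is a fin_num by rewrite (proj2 (t0E 0 (unit_itv0 R))).
have s_le1 u : (0 <= u)%E -> s u <= 1 by move=> /s_range /andP[].
have assocE := s_t_s_addE t_ge0 t_cont t_mono s_le1 s_mono t0_fin s_neutral.
by rewrite assocE // [in RHS]addeC assocE // (addeC (t y + t z)) addeA.
Qed.
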